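(* Let $(\Gamma,\omega,\Phi)$ be a classical Poincaré-invariant system with timelike future-directed four-momentum $P$, and let $\chi$ be a position observable for it. Then $\chi$ is a centre of spin position observable if and only if, for every $(u,\tau)\in\mathsf{SpHP}$ and every $\gamma\in\Gamma$, $$u^\flat\wedge P^\flat\wedge\big(\iota_{u+\frac{P}{mc}}S(u)\big)=0,$$ where $S(u)_{\mu\nu}=J_{\mu\nu}-\chi_\mu(u,\tau)P_\nu+\chi_\nu(u,\tau)P_\mu$ and $\iota_v S$ denotes the one-form $S(v,\cdot)$.
   Context: Minkowski spacetime: affine space $M$ over a 4-dimensional real vector space $V$ with metric $\eta$ of signature $(-,+,+,+)$, fixed orientation and time orientation, fixed origin identifying $M$ with $V$. $u\cdot v:=\eta(u,v)$, $v^\flat=\eta(v,\cdot)$, indices lowered/raised with $\eta$; $\varepsilon$ is the volume form with $\varepsilon_{0123}=+1$ in positively oriented orthonormal bases; $c>0$. $\mathsf{SpHP}$ is the set of spacelike hyperplanes, each identified with $(u,\tau)$, $u$ future-directed unit timelike normal, $\Sigma=\{x:u\cdot x=-\tau\}$. A classical Poincaré-invariant system has phase-space functions $P_\mu$ (four-momentum) and $J_{\mu\nu}=-J_{\nu\mu}$ (angular momentum about the origin); $m=\sqrt{-P\cdot P}/c$. A position observable is a map $\chi\colon\mathsf{SpHP}\times\Gamma\to M$ with $u_\mu\chi^\mu(u,\tau)=-\tau$ and $\partial\chi_\mu(u,\tau)/\partial\tau=P_\mu/(-u\cdot P)$; its spin tensor is $S(u)_{\mu\nu}=J_{\mu\nu}-\chi_\mu(u,\tau)P_\nu+\chi_\nu(u,\tau)P_\mu$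 (independent of $\tau$). The Pauli–Lubański vector is $W_\mu=-\tfrac12\varepsilon_{\mu\nu\rho\sigma}P^\nu J^{\rho\sigma}$. The spin vector in the frame $u$ is $s(u)=B(u)\,W/(mc)$, where $B(u)$ is the boost $B^\mu{}_\nu(u)=\delta^\mu_\nu+\frac{(P^\mu/(mc)+u^\mu)(P_\nu/(mc)+u_\nu)}{1-u\cdot P/(mc)}-2\frac{u^\mu P_\nu}{mc}$ mapping $P/(mc)$ to $u$. A position observable $\chi$ is a centre of spin if $s_\mu(u)=-\tfrac12\varepsilon_{\mu\nu\rho\sigma}u^\nu S^{\rho\sigma}(u)$ for all $(u,\tau)$ and all phase-space points. *)

From HB Require Import structures.
From mathcomp Require Import all_boot all_order all_algebra.
From mathcomp Require Import all_classical all_reals all_analysis.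
Set Implicit Arguments. Unset Strict Implicit. Unset Printing Implicit Defensive.
Import Order.TTheory GRing.Theory Num.Theory.
Local Open Scope ring_scope.

(* Minkowski space identified with R^4 through a positively oriented,
   time-oriented orthonormal basis e_0,...,e_3 (e_0 future-directed timelike).
   A vector is given by its contravariant components v^mu. *)
Definition vec (R : realType) := 'I_4 -> R.

Section Mink.
Variable R : realType.

Definition etad (mu : 'I_4) : R := if mu == ord0 then -1 else 1.

Definition lower (v : vec R) : vec R := fun mu => etad mu * v mu.

Definition mdot (u v : vec R) : R := \sum_(mu < 4) etad mu * u mu * v mu.

(* Levi-Civita symbol with all indices down, epsilon_{0123} = +1:
   product of signs over pairs, = sign of the permutation or 0. *)
Definition eps (a b c d : 'I_4) : R :=
  let s (x y : 'I_4) : R := Num.sg ((y : nat)%:R - (x : nat)%:R : R) in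
  s a b * s a c * s a d * s b c * s b d * s c d.

(* future-directed unit timelike vectors: normals of spacelike hyperplanes *)
Definition unit_future (u : vec R) : Prop := mdot u u = -1 /\ 0 < u ord0.

(* a phase-space point carries P^mu (contravariant) and J_{mu nu} (covariant) *)

Definition mass (c : R) (P : vec R) : R := Num.sqrt (- mdot P P) / c.

Definition spin_tensor (J : 'I_4 -> 'I_4 -> R) (x P : vec R) (mu nu : 'I_4) : R :=
  J mu nu - lower x mu * lower P nu + lower x nu * lower P mu.

Definition raise2 (T : 'I_4 -> 'I_4 -> R) (mu nu : 'I_4) : R :=
  etad mu * etad nu * T mu nu.

Definition pauli_lubanski (P : vec R) (J : 'I_4 -> 'I_4 -> R) (mu : 'I_4) : R :=
  - (1/2) * \sum_(nu < 4) \sum_(rho < 4) \sum_(sg < 4)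
      eps mu nu rho sg * P nu * raise2 J rho sg.

(* Boost B^mu_nu(u) mapping P/(mc) to u *)
Definition boost (c : R) (u P : vec R) (mu nu : 'I_4) : R :=
  let p := fun i => P i / (mass c P * c) in
  (if mu == nu then 1 else 0)
  + (p mu + u mu) * (lower p nu + lower u nu) / (1 - mdot u p)
  - 2 * u mu * lower p nu.

Definition spin_vector (c : R) (u P : vec R) (J : 'I_4 -> 'I_4 -> R) (mu : 'I_4) : R :=
  \sum_(nu < 4) boost c u P mu nu * (etad nu * pauli_lubanski P J nu) / (mass c P * c).

Definition u_plus_p (c : R) (u P : vec R) : vec R :=
  fun mu => u mu + P mu / (mass c P * c).

Definition iprod (v : vec R) (S : 'I_4 -> 'I_4 -> R) (nu : 'I_4) : R :=
  \sum_(mu < 4) v mu * S mu nu.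

Definition wedge3 (a b c : vec R) (i j k : 'I_4) : R :=
    a i * (b j * c k - b k * c j)
  - a j * (b i * c k - b k * c i)
  + a k * (b i * c j - b j * c i).

(* chi : SpHP x Gamma -> M, with SpHP parametrised by (u, tau) *)
Definition position_observable (Gamma : Type) (P : Gamma -> vec R)
    (chi : vec R -> R -> Gamma -> vec R) : Prop :=
  forall (u : vec R), unit_future u -> forall (tau : R) (g : Gamma),
    mdot u (chi u tau g) = - tau /\
    forall mu : 'I_4,
      is_derive tau 1 (fun t : R => lower (chi u t g) mu)
                (lower (P g) mu / (- mdot u (P g))).

Definition centre_of_spin (c : R) (Gamma : Type) (P : Gamma -> vec R)
    (J : Gamma -> 'I_4 -> 'I_4 -> R) (chi : vec R -> R -> Gamma -> vec R) : Prop :=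
  forall (u : vec R), unit_future u -> forall (tau : R) (g : Gamma),
    forall mu : 'I_4,
      lower (spin_vector c u (P g) (J g)) mu =
      - (1/2) * \sum_(nu < 4) \sum_(rho < 4) \sum_(sg < 4)
          eps mu nu rho sg * u nu
            * raise2 (spin_tensor (J g) (chi u tau g) (P g)) rho sg.

End Mink.

(* Write p = P/(mc) for the unit four-velocity, S = S(u) for the spin tensor and
   sigma_w(S)_mu = -1/2 eps_{mu nu rho sigma} w^nu S^{rho sigma} for the vector
   dual to S seen by an observer w.  The proof is pointwise in (u, tau, gamma):
   1. W/(mc) = sigma_p(J) = sigma_p(S): the orbital part of S drops out since p
      is parallel to P, and sigma_p(S) is orthogonal to p.
   2. On vectors orthogonal to p the boost is B(u) v = v + (u + p)(u.v)/(1 - u.p),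
      so s(u) = sigma_p(S) + (u + p)(u.sigma_p(S))/(1 - u.p).
   3. A component identity, valid for all u, p and antisymmetric S, shows that
      (1 - u.p)(s(u) - sigma_u(S)) is the Hodge dual of u /\ p /\ iota_{u+p} S
      once u.u = p.p = -1.
   4. 1 - u.p > 0 by the reverse Cauchy-Schwarz inequality, and a 3-form in
      dimension 4 vanishes iff its Hodge dual does. *)
From HB Require Import structures.
From mathcomp Require Import all_boot all_order all_algebra.
From mathcomp Require Import all_classical all_reals all_analysis.
From mathcomp Require Import ring lra.
Import Order.TTheory GRing.Theory Num.Theory.
Local Open Scope ring_scope.
Set Implicit Arguments. Unset Strict Implicit. Unset Printing Implicit Defensive.

Definition o0 : 'I_4 := @Ordinal 4 0 isT.
Definition o1 : 'I_4 := @Ordinal 4 1 isT.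
Definition o2 : 'I_4 := @Ordinal 4 2 isT.
Definition o3 : 'I_4 := @Ordinal 4 3 isT.

Lemma ord4_cases (i : 'I_4) : i = o0 \/ i = o1 \/ i = o2 \/ i = o3.
Proof.
case: i => [[|[|[|[|i]]]] Hi] //.
- by left; apply: val_inj.
- by right; left; apply: val_inj.
- by right; right; left; apply: val_inj.
- by right; right; right; apply: val_inj.
Qed.

Lemma sum4 (R : realType) (F : 'I_4 -> R) :
  \sum_(i < 4) F i = F o0 + F o1 + F o2 + F o3.
Proof.
rewrite !big_ord_recl big_ord0 addr0 !addrA.
by congr (_ + _ + _ + _); apply: congr1; apply: val_inj.
Qed.

Section LeviCivita.
Variable R : realType.

(* The sign of y - x, computed on natural numbers so that it evaluates. *)
Definition sgnn (x y : nat) : R :=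
  if (x < y)%N then 1 else if x == y then 0 else -1.

Lemma eps_E (a b c d : 'I_4) :
  eps R a b c d = sgnn a b * sgnn a c * sgnn a d * sgnn b c * sgnn b d * sgnn c d.
Proof.
have sgE (x y : 'I_4) : Num.sg ((y : nat)%:R - (x : nat)%:R : R) = sgnn x y.
  rewrite /sgnn; case: ltngtP => xy.
  - by apply: gtr0_sg; rewrite subr_gt0 ltr_nat.
  - by apply: ltr0_sg; rewrite subr_lt0 ltr_nat.
  - by rewrite xy subrr sgr0.
by rewrite /eps !sgE.
Qed.

Definition levi (T : 'I_4 -> 'I_4 -> 'I_4 -> R) (mu : 'I_4) : R :=
  \sum_(a < 4) \sum_(b < 4) \sum_(c < 4) eps R mu a b c * T a b c.

Definition alt3 (T : 'I_4 -> 'I_4 -> 'I_4 -> R) (i j k : 'I_4) : R :=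
  T i j k - T i k j - T j i k + T j k i + T k i j - T k j i.

Lemma levi_o0 T : levi T o0 = alt3 T o1 o2 o3.
Proof. by rewrite /levi !sum4 !eps_E /sgnn /= /alt3; ring. Qed.
Lemma levi_o1 T : levi T o1 = - alt3 T o0 o2 o3.
Proof. by rewrite /levi !sum4 !eps_E /sgnn /= /alt3; ring. Qed.
Lemma levi_o2 T : levi T o2 = alt3 T o0 o1 o3.
Proof. by rewrite /levi !sum4 !eps_E /sgnn /= /alt3; ring. Qed.
Lemma levi_o3 T : levi T o3 = - alt3 T o0 o1 o2.
Proof. by rewrite /levi !sum4 !eps_E /sgnn /= /alt3; ring. Qed.

End LeviCivita.

Section HodgeThreeForms.
Variable R : realType.
Implicit Types a b v : vec R.

Definition tensor3 a b v : 'I_4 -> 'I_4 -> 'I_4 -> R :=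
  fun i j k => a i * b j * v k.

Lemma wedge3_alt a b v i j k : wedge3 a b v i j k = alt3 (tensor3 a b v) i j k.
Proof. by rewrite /wedge3 /alt3 /tensor3; ring. Qed.

Lemma wedge3_levi a b v i j k :
  wedge3 a b v i j k = \sum_(mu < 4) eps R mu i j k * levi (tensor3 a b v) mu.
Proof.
rewrite sum4 levi_o0 levi_o1 levi_o2 levi_o3 /alt3 /tensor3 /wedge3.
by case: (ord4_cases i) => [->|[->|[->|->]]];
   case: (ord4_cases j) => [->|[->|[->|->]]];
   case: (ord4_cases k) => [->|[->|[->|->]]]; rewrite !eps_E /sgnn /=; ring.
Qed.

Lemma wedge3_eq0P a b v :
  (forall mu, levi (tensor3 a b v) mu = 0) <-> (forall i j k, wedge3 a b v i j k = 0).
Proof.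
split=> [dual0 i j k | wedge0 mu].
  by rewrite wedge3_levi big1 // => mu _; rewrite dual0 mulr0.
case: (ord4_cases mu) => [->|[->|[->|->]]];
  by rewrite ?levi_o0 ?levi_o1 ?levi_o2 ?levi_o3 -wedge3_alt wedge0 ?oppr0.
Qed.

End HodgeThreeForms.

Section Metric.
Variable R : realType.
Implicit Types u p P : vec R.

Lemma etadE : (etad R o0 = -1) * (etad R o1 = 1) * (etad R o2 = 1) * (etad R o3 = 1).
Proof. by []. Qed.

Lemma etad_sq (mu : 'I_4) : etad R mu * etad R mu = 1.
Proof. by rewrite /etad; case: ifP => _; rewrite ?mulrNN mulr1. Qed.

Lemma etad_neq0 (mu : 'I_4) : etad R mu != 0.
Proof.
by apply/eqP => e; have := etad_sq mu; rewrite e mul0r => /eqP; rewrite eq_sym oner_eq0.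
Qed.

Lemma mdot4 u p :
  mdot u p = - u o0 * p o0 + u o1 * p o1 + u o2 * p o2 + u o3 * p o3.
Proof. by rewrite /mdot sum4 /etad /=; ring. Qed.

(* Reverse Cauchy-Schwarz: two future-directed unit timelike vectors have
   negative inner product.  Lagrange's identity bounds the spatial part. *)
Lemma reverse_cauchy_schwarz u p :
  unit_future u -> unit_future p -> mdot u p < 0.
Proof.
have ord0E : ord0 = o0 :> 'I_4 by apply: val_inj.
rewrite /unit_future !mdot4 ord0E.
move: (u o0) (u o1) (u o2) (u o3) (p o0) (p o1) (p o2) (p o3) => a u1 u2 u3 b p1 p2 p3.
move=> [hu ha] [hp hb].
set d := u1 * p1 + u2 * p2 + u3 * p3.
set U := u1 ^+ 2 + u2 ^+ 2 + u3 ^+ 2; set Q := p1 ^+ 2 + p2 ^+ 2 + p3 ^+ 2.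
have lagrange : d ^+ 2 <= U * Q.
  rewrite -subr_ge0.
  have -> : U * Q - d ^+ 2 =
    (u1 * p2 - u2 * p1) ^+ 2 + (u1 * p3 - u3 * p1) ^+ 2 + (u2 * p3 - u3 * p2) ^+ 2.
    by rewrite /U /Q /d; ring.
  by rewrite !addr_ge0 ?sqr_ge0.
have ha2 : a ^+ 2 = 1 + U by rewrite /U; lra.
have hb2 : b ^+ 2 = 1 + Q by rewrite /Q; lra.
have U0 : 0 <= U by rewrite !addr_ge0 ?sqr_ge0.
have Q0 : 0 <= Q by rewrite !addr_ge0 ?sqr_ge0.
have dab : d ^+ 2 < (a * b) ^+ 2 by rewrite exprMn ha2 hb2; nra.
have : d < a * b by have := mulr_gt0 ha hb; nra.
by rewrite /d; lra.
Qed.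

Lemma mass_energy_gt0 (c : R) P : 0 < c -> mdot P P < 0 -> 0 < mass c P * c.
Proof. by move=> c0 PP; rewrite /mass divfK ?gt_eqF // sqrtr_gt0 oppr_gt0. Qed.

(* The four-velocity p = P/(mc), the vector the boost B(u) sends to u. *)
Definition four_velocity (c : R) P : vec R := fun i => P i / (mass c P * c).

Lemma unit_future_four_velocity (c : R) P : 0 < c -> mdot P P < 0 -> 0 < P ord0 ->
  unit_future (four_velocity c P).
Proof.
move=> c0 PP P0; have M0 := mass_energy_gt0 c0 PP.
have M2 : (mass c P * c) ^+ 2 = - mdot P P.
  by rewrite /mass divfK ?gt_eqF // sqr_sqrtr // oppr_ge0 ltW.
rewrite /four_velocity; move: (mass c P * c) M0 M2 => M M0 M2.
split; last by rewrite divr_gt0.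
have -> : mdot (fun i => P i / M) (fun i => P i / M) = mdot P P / M ^+ 2.
  by rewrite !mdot4; field; rewrite gt_eqF.
by rewrite M2 invrN mulrN divff // lt_eqF.
Qed.

Lemma boost_denominator_gt0 (c : R) u P :
  0 < c -> mdot P P < 0 -> 0 < P ord0 -> unit_future u ->
  0 < 1 - mdot u (four_velocity c P).
Proof.
move=> c0 PP P0 hu; have hp := unit_future_four_velocity c0 PP P0.
by rewrite subr_gt0 (lt_trans (reverse_cauchy_schwarz hu hp)).
Qed.

End Metric.

Section SpinDuals.
Variable R : realType.
Implicit Types (u p w x P : vec R) (S J : 'I_4 -> 'I_4 -> R).

(* The Pauli-Lubanski vector is sigma_P(J) and the
   right-hand side of the centre-of-spin condition is sigma_u(S(u)). *)
Definition eps_dual w S (mu : 'I_4) : R :=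
  - (1/2) * \sum_(nu < 4) \sum_(rho < 4) \sum_(sg < 4)
      eps R mu nu rho sg * w nu * raise2 S rho sg.

Lemma eps_dual_levi w S mu :
  eps_dual w S mu = - (1/2) * levi (fun a b c => w a * raise2 S b c) mu.
Proof.
congr (_ * _); apply: eq_bigr => a _; apply: eq_bigr => b _.
by apply: eq_bigr => c _; rewrite mulrA.
Qed.

Lemma eps_dual_div w S (k : R) mu :
  eps_dual (fun i => w i / k) S mu = eps_dual w S mu / k.
Proof.
rewrite !eps_dual_levi; case: (ord4_cases mu) => [->|[->|[->|->]]];
  rewrite ?levi_o0 ?levi_o1 ?levi_o2 ?levi_o3 /alt3; ring.
Qed.

Lemma eps_dual_orth w S : \sum_(nu < 4) w nu * eps_dual w S nu = 0.
Proof. by rewrite sum4 !eps_dual_levi levi_o0 levi_o1 levi_o2 levi_o3 /alt3; ring. Qed.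

(* Seen from a frame parallel to P, the orbital part x /\ P of the spin
   tensor is invisible: sigma_p(S) = sigma_p(J). *)
Lemma eps_dual_orbital J x P (k : R) mu :
  eps_dual (fun i => P i / k) (spin_tensor J x P) mu = eps_dual (fun i => P i / k) J mu.
Proof.
rewrite !eps_dual_levi /spin_tensor /raise2 /lower.
case: (ord4_cases mu) => [->|[->|[->|->]]];
  rewrite ?levi_o0 ?levi_o1 ?levi_o2 ?levi_o3 /alt3 !etadE; ring.
Qed.

Lemma antisym_diag S : (forall i j, S i j = - S j i) -> forall i, S i i = 0.
Proof.
move=> anti i; apply/eqP.
by rewrite -[_ == 0](mulrn_eq0 _ 2) mulr2n {1}anti addNr.
Qed.

Lemma spin_tensor_antisym J x P : (forall i j, J i j = - J j i) ->
  forall i j, spin_tensor J x P i j = - spin_tensor J x P j i.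
Proof. by move=> anti i j; rewrite /spin_tensor anti; ring. Qed.

(* The central identity, for arbitrary u, p and antisymmetric S: up to the
   terms vanishing when u and p are unit timelike, (1 - u.p) times the defect
   of the centre-of-spin condition is the Hodge dual of u /\ p /\ iota_{u+p} S. *)
Lemma defect_identity u p S mu : (forall i j, S i j = - S j i) ->
  (1 - mdot u p) * (eps_dual p S mu - eps_dual u S mu)
    + (lower p mu + lower u mu) * (\sum_(nu < 4) u nu * eps_dual p S nu)
  = etad R mu * levi (tensor3 (lower u) (lower p) (iprod (fun i => u i + p i) S)) mu
    + eps_dual p S mu * (mdot u u + 1) - eps_dual u S mu * (mdot p p + 1).
Proof.
move=> anti; have S0 := antisym_diag anti.
rewrite sum4 !eps_dual_levi !mdot4 /iprod /tensor3 /lower /raise2.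
case: (ord4_cases mu) => [->|[->|[->|->]]];
  rewrite ?levi_o0 ?levi_o1 ?levi_o2 ?levi_o3 /alt3 !sum4 !etadE !S0
    (anti o1 o0) (anti o2 o0) (anti o3 o0) (anti o2 o1) (anti o3 o1) (anti o3 o2);
  by field.
Qed.

Lemma boost_orth (c : R) u P (v : 'I_4 -> R) mu :
  \sum_(nu < 4) four_velocity c P nu * v nu = 0 ->
  \sum_(nu < 4) boost c u P mu nu * (etad R nu * v nu)
  = etad R mu * v mu + (four_velocity c P mu + u mu)
      * (\sum_(nu < 4) u nu * v nu) / (1 - mdot u (four_velocity c P)).
Proof.
move=> orth.
have -> : \sum_(nu < 4) boost c u P mu nu * (etad R nu * v nu)
  = etad R mu * v mu + (four_velocity c P mu + u mu)
      * (\sum_(nu < 4) four_velocity c P nu * v nu + \sum_(nu < 4) u nu * v nu)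
      / (1 - mdot u (four_velocity c P))
    - 2 * u mu * \sum_(nu < 4) four_velocity c P nu * v nu.
  rewrite /boost !sum4 /lower /four_velocity.
  by case: (ord4_cases mu) => [->|[->|[->|->]]] /=; rewrite !etadE; ring.
by rewrite orth add0r mulr0 subr0.
Qed.

End SpinDuals.

Section CentreOfSpin.
Variable R : realType.
Implicit Types (u P x : vec R) (J : 'I_4 -> 'I_4 -> R).

Lemma spin_vector_formula (c : R) u P J x mu :
  lower (spin_vector c u P J) mu
  = eps_dual (four_velocity c P) (spin_tensor J x P) mu
    + (lower (four_velocity c P) mu + lower u mu)
      * (\sum_(nu < 4) u nu * eps_dual (four_velocity c P) (spin_tensor J x P) nu)
      / (1 - mdot u (four_velocity c P)).
Proof.
set w := eps_dual (four_velocity c P) (spin_tensor J x P).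
have W_w nu : pauli_lubanski P J nu / (mass c P * c) = w nu.
  by rewrite /w /four_velocity eps_dual_orbital eps_dual_div.
have orth : \sum_(nu < 4) four_velocity c P nu * w nu = 0 by exact: eps_dual_orth.
rewrite /lower /spin_vector.
under eq_bigr => nu _ do rewrite -mulrA -mulrA W_w.
rewrite boost_orth // mulrDr mulrA etad_sq mul1r.
by ring.
Qed.

Lemma spin_defect (c : R) u P J x mu :
  0 < c -> mdot P P < 0 -> 0 < P ord0 -> unit_future u ->
  (forall i j, J i j = - J j i) ->
  lower (spin_vector c u P J) mu - eps_dual u (spin_tensor J x P) mu
  = etad R mu
      * levi (tensor3 (lower u) (lower (four_velocity c P))
                (iprod (u_plus_p c u P) (spin_tensor J x P))) mu
      / (1 - mdot u (four_velocity c P)).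
Proof.
move=> c0 PP P0 hu anti; have hp := unit_future_four_velocity c0 PP P0.
have k0 := boost_denominator_gt0 c0 PP P0 hu.
have := defect_identity u (four_velocity c P) mu (spin_tensor_antisym x P anti).
rewrite hu.1 hp.1 addNr !mulr0 addr0 subr0 => <-.
by rewrite (spin_vector_formula c u P J x); field; rewrite gt_eqF.
Qed.

Lemma centre_of_spin_at (c : R) u P J x :
  0 < c -> mdot P P < 0 -> 0 < P ord0 -> unit_future u ->
  (forall i j, J i j = - J j i) ->
  (forall mu, lower (spin_vector c u P J) mu = eps_dual u (spin_tensor J x P) mu) <->
  (forall i j k,
     wedge3 (lower u) (lower P) (iprod (u_plus_p c u P) (spin_tensor J x P)) i j k = 0).
Proof.
move=> c0 PP P0 hu anti.
set v := iprod (u_plus_p c u P) (spin_tensor J x P).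
have M0 := mass_energy_gt0 c0 PP; have k0 := boost_denominator_gt0 c0 PP P0 hu.
have defect mu := spin_defect x mu c0 PP P0 hu anti.
have scale i j k : wedge3 (lower u) (lower P) v i j k
    = mass c P * c * wedge3 (lower u) (lower (four_velocity c P)) v i j k.
  rewrite /wedge3 /lower /four_velocity; move: (mass c P * c) M0 => M M0.
  by field; rewrite gt_eqF.
transitivity (forall mu, levi (tensor3 (lower u) (lower (four_velocity c P)) v) mu = 0).
  split=> h mu.
    have /esym/eqP := defect mu; rewrite h subrr !mulf_eq0 invr_eq0.
    by rewrite (gt_eqF k0) (negbTE (etad_neq0 R mu)) orbF => /eqP.
  by apply/eqP; rewrite -subr_eq0 defect h mulr0 mul0r.
rewrite wedge3_eq0P; split=> h i j k.
  by rewrite scale h mulr0.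
by have /eqP := h i j k; rewrite scale mulf_eq0 (gt_eqF M0) => /eqP.
Qed.

End CentreOfSpin.

Unset Implicit Arguments.

(* The centre-of-spin condition holds iff u /\ P /\ iota_{u + P/(mc)} S(u) = 0
   everywhere. *)
Theorem mainTheorem2 (R : realType) (c : R) (hc : 0 < c)
  (Gamma : Type) (P : Gamma -> vec R) (J : Gamma -> 'I_4 -> 'I_4 -> R)
  (hJ : forall g mu nu, J g mu nu = - J g nu mu)
  (hP : forall g, mdot (P g) (P g) < 0 /\ 0 < P g ord0)
  (chi : vec R -> R -> Gamma -> vec R)
  (hchi : position_observable P chi) :
  centre_of_spin c P J chi <->
  (forall (u : vec R), unit_future u -> forall (tau : R) (g : Gamma),
     forall i j k : 'I_4,
       wedge3 (lower u) (lower (P g))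
         (iprod (u_plus_p c u (P g))
               (spin_tensor (J g) (chi u tau g) (P g))) i j k = 0).
Proof.
split=> [centre | wedge0] u hu tau g; have [PP P0] := hP g;
  have pointwise := centre_of_spin_at (chi u tau g) hc PP P0 hu (hJ g).
- by apply/pointwise; exact: centre.
- by apply/pointwise; exact: wedge0.
Qed.
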